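(* Let $A$ be a reachable $\mathbf{JSL}$-dfa. Then the transition semiring $\mathrm{ts}(A)$, viewed as a $\mathbf{JSL}$-dfa, satisfies $[\mathrm{ts}(A)]^{\mathsf{op}}\cong\mathrm{rqc}(A^{\mathsf{op}})$ as $\mathbf{JSL}$-dfas (equivalently, since both are simple, the states of $[\mathrm{ts}(A)]^{\mathsf{op}}$ accept exactly the languages that are states of $\mathrm{rqc}(A^{\mathsf{op}})$).
   Context: A $\mathbf{JSL}$-dfa $A=(S,\delta,s_0,F)$: finite semilattice $S$, join-preserving $\delta_a\colon S\to S$, initial state $s_0$, final states $F=\{s:s\not\le s_f\}$ for some $s_f$; $\delta_w=\delta_{a_n}\circ\cdots\circ\delta_{a_1}$ for $w=a_1\cdots a_n$; $L(A,s)=\{w:\delta_w(s)\in F\}$. $A$ is reachable if every state is a finite join of states $\delta_w(s_0)$; simple if distinct states accept distinct languages. Morphisms: join-preserving maps preserving transitions, initial state and final states (both ways). The dual $A^{\mathsf{op}}$ has reversed order, transitions $\delta_a^*(s)=$ largest $t$ with $\delta_a(t)\le s$, initial state the largest non-final state, final states $\{s:s_0\not\le s\}$. Transition semiring: $\mathrm{ts}(A)$ is the set of all maps $\bigvee_{i=1}^n\delta_{w_i}\colon S\to S$ ($n\ge0$, $w_i\in\Sigma^*$, join taken pointwise), ordered pointwise, viewed as a $\mathbf{JSL}$-dfa with initial state $\delta_\epsilon=\mathrm{id}_S$, transitions $\bigvee_i\delta_{w_i}\xrightarrow{a}\bigvee_i\delta_{w_ia}$, and final states those $\bigvee_i\delta_{w_i}$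 such that some $w_i$ is accepted by $A$. For a simple $\mathbf{JSL}$-dfa $B$, $\mathrm{rqc}(B)$ (right-derivative closure) is the $\mathbf{JSL}$-dfa whose states are the smallest set of languages containing all $L(B,s)$ and closed under finite unions and right derivatives $K\mapsto Kv^{-1}=\{w:wv\in K\}$, ordered by inclusion, with transitions $K\mapsto a^{-1}K$, initial state the language of $B$, final states those containing $\epsilon$. *)

From mathcomp Require Import all_boot.
From Stdlib Require Import ClassicalEpsilon.


Record jdfa (Sigma : Type) := JDfa {
  st : Type;
  le : st -> st -> Prop;
  jn : st -> st -> st;
  bot : st;
  delta : Sigma -> st -> st;
  init : st;
  fin : st -> Prop }.

Arguments st {Sigma} j.
Arguments le {Sigma} j _ _.
Arguments jn {Sigma} j _ _.
Arguments bot {Sigma} j.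
Arguments delta {Sigma} j _ _.
Arguments init {Sigma} j.
Arguments fin {Sigma} j _.

Section JSL.
Context {Sigma : Type}.
Implicit Types A B : jdfa Sigma.

Definition deltaw A (w : seq Sigma) (s : st A) : st A :=
  foldl (fun t a => delta A a t) s w.

Definition lang_of A (s : st A) : seq Sigma -> Prop :=
  fun w => fin A (deltaw A w s).

Definition bigjn A (l : seq (st A)) : st A := foldr (jn A) (bot A) l.

Record is_jsl_dfa A : Prop := {
  jsl_finite : exists l : seq (st A), forall x, List.In x l;
  jsl_refl : forall x, le A x x;
  jsl_antisym : forall x y, le A x y -> le A y x -> x = y;
  jsl_trans : forall x y z, le A x y -> le A y z -> le A x z;
  jsl_jn_ubl : forall x y, le A x (jn A x y);
  jsl_jn_ubr : forall x y, le A y (jn A x y);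
  jsl_jn_least : forall x y z, le A x z -> le A y z -> le A (jn A x y) z;
  jsl_bot_least : forall x, le A (bot A) x;
  jsl_delta_jn : forall a x y, delta A a (jn A x y) = jn A (delta A a x) (delta A a y);
  jsl_delta_bot : forall a, delta A a (bot A) = bot A;
  jsl_final : exists sf, forall s, fin A s <-> ~ le A s sf }.

Definition reachable A : Prop :=
  forall s, exists ws : seq (seq Sigma),
    s = bigjn A (map (fun w => deltaw A w (init A)) ws).

(* the greatest element satisfying P (chosen classically; d is a default) *)
Definition greatest {T : Type} (d : T) (leT : T -> T -> Prop) (P : T -> Prop) : T :=
  epsilon (inhabits d) (fun z => P z /\ forall t, P t -> leT t z).

(* The dual A^op: reversed order (so its join is the meet of A, its bottom
   the top of A), delta*_a(s) = largest t with delta_a t <= s, initial state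
   the largest non-final state, final states {s | s_0 not <= s}. *)
Definition dual A : jdfa Sigma :=
  @JDfa Sigma (st A)
    (fun x y => le A y x)
    (fun x y => greatest (init A) (le A) (fun z => le A z x /\ le A z y))
    (greatest (init A) (le A) (fun _ => True))
    (fun a s => greatest (init A) (le A) (fun t => le A (delta A a t) s))
    (greatest (init A) (le A) (fun t => ~ fin A t))
    (fun s => ~ le A (init A) s).

Definition fjoin A (ws : seq (seq Sigma)) : st A -> st A :=
  fun s => bigjn A (map (fun w => deltaw A w s) ws).

Definition ts_st A := { g : st A -> st A | exists ws, g = fjoin A ws }.

Definition ts_val A (g : ts_st A) : st A -> st A := proj1_sig g.

Definition ts_bot A : ts_st A :=
  exist (fun g => exists ws, g = fjoin A ws) (fun _ => bot A) (ex_intro _ [::] erefl).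

Definition ts_pick A (f : st A -> st A) : ts_st A :=
  epsilon (inhabits (ts_bot A)) (fun k => ts_val A k = f).

Definition ts A : jdfa Sigma :=
  @JDfa Sigma (ts_st A)
    (fun g h => forall s, le A (ts_val A g s) (ts_val A h s))
    (fun g h => ts_pick A (fun s => jn A (ts_val A g s) (ts_val A h s)))
    (ts_bot A)
    (* \/_i delta_{w_i}  --a-->  \/_i delta_{w_i a} *)
    (fun a g => epsilon (inhabits (ts_bot A)) (fun k =>
        exists ws, ts_val A g = fjoin A ws /\
                   ts_val A k = fjoin A [seq rcons w a | w <- ws]))
    (ts_pick A id)
    (fun g => exists ws, ts_val A g = fjoin A ws /\
                exists2 w, List.In w ws & lang_of A (init A) w).

Definition lang := seq Sigma -> Prop.

Inductive rqc_set B : lang -> Prop :=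
| rqc_base s : rqc_set B (lang_of B s)
| rqc_empty : rqc_set B (fun _ => False)
| rqc_union K1 K2 : rqc_set B K1 -> rqc_set B K2 ->
    rqc_set B (fun w => K1 w \/ K2 w)
| rqc_rder K (v : seq Sigma) : rqc_set B K -> rqc_set B (fun w => K (w ++ v)).

Definition rqc_st B := { K : lang | rqc_set B K }.

Definition rqc_val B (K : rqc_st B) : lang := proj1_sig K.

Definition rqc_bot B : rqc_st B := exist (rqc_set B) (fun _ => False) (rqc_empty B).

Definition rqc_pick B (K : lang) : rqc_st B :=
  epsilon (inhabits (rqc_bot B)) (fun k => rqc_val B k = K).

Definition rqc B : jdfa Sigma :=
  @JDfa Sigma (rqc_st B)
    (fun K1 K2 => forall w, rqc_val B K1 w -> rqc_val B K2 w)
    (fun K1 K2 => rqc_pick B (fun w => rqc_val B K1 w \/ rqc_val B K2 w))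
    (rqc_bot B)
    (fun a K => rqc_pick B (fun w => rqc_val B K (a :: w)))
    (exist (rqc_set B) (lang_of B (init B)) (rqc_base B (init B)))
    (fun K => rqc_val B K [::]).

Definition jdfa_morph A B (f : st A -> st B) : Prop :=
  (forall x y, f (jn A x y) = jn B (f x) (f y)) /\
  f (bot A) = bot B /\
  (forall a x, f (delta A a x) = delta B a (f x)) /\
  f (init A) = init B /\
  (forall x, fin A x <-> fin B (f x)).

Definition jdfa_iso A B : Prop :=
  exists (f : st A -> st B) (g : st B -> st A),
    jdfa_morph A B f /\ jdfa_morph B A g /\ cancel f g /\ cancel g f.

End JSL.

From mathcomp Require Import all_boot.
From Stdlib Require Import ClassicalEpsilon Classical FunctionalExtensionality PropExtensionality ProofIrrelevance.
From Stdlib Require List.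

(* For a state x of ts(A)^op let Phi x be the language it accepts.  Two
   Galois-connection computations drive the proof.  In the dual B^op of any
   JSL-dfa B, w is accepted from s iff delta_{rev w}(s_0) is not below s
   (dual_lang); applied to B = ts(A), whose state reached by v is the map
   delta_v, this says Phi x = { w | delta_{rev w} is not pointwise below x }.
   Consequently Phi is injective (every element of ts(A) is the join of the
   maps delta_v below it), sends joins of ts(A)^op to unions, its bottom to
   the empty language and its initial state to L(A^op).  Its image is exactly
   the state set of rqc(A^op): since A is reachable, Phi x is a finite union
   of right derivatives of the languages L(A^op, s); conversely each
   generator of rqc(A^op) is accepted by the greatest element of a suitable
   down-closed, join-closed set of maps.  So Phi is a bijective morphism, and
   the inverse of a bijective morphism is a morphism. *)

Arguments jsl_finite {Sigma A} _.
Arguments jsl_refl {Sigma A} _.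
Arguments jsl_antisym {Sigma A} _.
Arguments jsl_trans {Sigma A} _.
Arguments jsl_jn_ubl {Sigma A} _.
Arguments jsl_jn_ubr {Sigma A} _.
Arguments jsl_jn_least {Sigma A} _.
Arguments jsl_bot_least {Sigma A} _.
Arguments jsl_delta_jn {Sigma A} _.
Arguments jsl_delta_bot {Sigma A} _.
Arguments jsl_final {Sigma A} _.

Section JslFacts.
Context {Sigma : Type} {B : jdfa Sigma} (HB : is_jsl_dfa B).

Lemma bigjn_map_ub {X : Type} (f : X -> st B) l x :
  List.In x l -> le B (f x) (bigjn B (map f l)).
Proof.
elim: l => [|y l IH] //= [<-|Hx]; first exact: jsl_jn_ubl.
exact: jsl_trans HB _ _ _ (IH Hx) (jsl_jn_ubr HB _ _).
Qed.

Lemma bigjn_map_least {X : Type} (f : X -> st B) l c :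
  (forall x, List.In x l -> le B (f x) c) -> le B (bigjn B (map f l)) c.
Proof.
elim: l => [|y l IH] /= H; first exact: jsl_bot_least.
apply: (jsl_jn_least HB); first exact: H y (or_introl erefl).
by apply: IH => x Hx; apply: H x (or_intror Hx).
Qed.

Lemma not_le_bigjn_map {X : Type} (f : X -> st B) l c :
  ~ le B (bigjn B (map f l)) c <-> exists2 x, List.In x l & ~ le B (f x) c.
Proof.
split=> [Hn | [x Hx Hfx] Hle]; last exact: Hfx (jsl_trans HB _ _ _ (bigjn_map_ub f _ _ Hx) Hle).
apply: NNPP => Hno; apply: Hn; apply: bigjn_map_least => x Hx.
by apply: NNPP => Hfx; apply: Hno; exists x.
Qed.

Lemma delta_mono a x y : le B x y -> le B (delta B a x) (delta B a y).
Proof.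
move=> Hxy; have -> : y = jn B x y.
  apply: (jsl_antisym HB); first exact: jsl_jn_ubr.
  exact: jsl_jn_least HB _ _ _ Hxy (jsl_refl HB _).
rewrite (jsl_delta_jn HB); exact: jsl_jn_ubl.
Qed.

Lemma delta_bigjn a l : delta B a (bigjn B l) = bigjn B (map (delta B a) l).
Proof.
by elim: l => [|x l IH] /=; rewrite ?(jsl_delta_bot HB) ?(jsl_delta_jn HB) ?IH.
Qed.

Lemma deltaw_bigjn v l : deltaw B v (bigjn B l) = bigjn B (map (deltaw B v) l).
Proof.
elim: v l => [|a v IH] l /=; first by elim: l => //= x l <-.
by rewrite -/(deltaw B v _) delta_bigjn IH -map_comp.
Qed.

End JslFacts.

Lemma deltaw_rcons {Sigma : Type} (B : jdfa Sigma) v a s :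
  deltaw B (rcons v a) s = delta B a (deltaw B v s).
Proof. by rewrite /deltaw foldl_rcons. Qed.

Lemma deltaw_cat {Sigma : Type} (B : jdfa Sigma) u v s :
  deltaw B (u ++ v) s = deltaw B v (deltaw B u s).
Proof. by rewrite /deltaw foldl_cat. Qed.

Lemma ex_greatest {X : Type} {leX : X -> X -> Prop} {jnX : X -> X -> X} {b : X}
  {l : seq X} (Hl : forall x, List.In x l)
  (Htrans : forall x y z, leX x y -> leX y z -> leX x z)
  (Hubl : forall x y, leX x (jnX x y)) (Hubr : forall x y, leX y (jnX x y))
  (P : X -> Prop) : P b -> (forall x y, P x -> P y -> P (jnX x y)) ->
  exists z, P z /\ forall t, P t -> leX t z.
Proof.
move=> Pb Pjn.
suff [z [Pz Hz]] : exists z, P z /\ forall t, List.In t l -> P t -> leX t z.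
  by exists z; split=> // t; apply: Hz.
elim: l {Hl} => [|x l [z [Pz Hz]]]; first by exists b.
case: (classic (P x)) => Px; last by exists z; split=> // t [<-|Ht] Pt //; apply: Hz.
exists (jnX x z); split; first exact: Pjn.
move=> t [<-|Ht] Pt; first exact: Hubl.
exact: Htrans (Hz t Ht Pt) (Hubr _ _).
Qed.

Section Greatest.
Context {Sigma : Type} {B : jdfa Sigma} (HB : is_jsl_dfa B).

(* Every operation of the dual and of the inverse of Phi is of this form. *)
Lemma le_greatest (P : st B -> Prop) :
  P (bot B) -> (forall x y, P x -> P y -> P (jn B x y)) ->
  (forall x y, le B x y -> P y -> P x) ->
  forall t, le B t (greatest (init B) (le B) P) <-> P t.
Proof.
move=> Pbot Pjn Pdown t.
have [l Hl] := jsl_finite HB.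
have [Pmax Hmax] : P (greatest (init B) (le B) P) /\
    forall t, P t -> le B t (greatest (init B) (le B) P).
  apply: (epsilon_spec (inhabits (init B)) (fun z => P z /\ forall t, P t -> le B t z)).
  exact: ex_greatest Hl (jsl_trans HB) (jsl_jn_ubl HB) (jsl_jn_ubr HB) P Pbot Pjn.
by split=> [Ht | /Hmax //]; apply: Pdown Ht Pmax.
Qed.

End Greatest.

Section Dual.
Context {Sigma : Type} {B : jdfa Sigma} (HB : is_jsl_dfa B).

Lemma dual_meet (x y t : st B) : le B t (jn (dual B) x y) <-> le B t x /\ le B t y.
Proof.
rewrite /=; apply: (le_greatest HB (fun z => le B z x /\ le B z y)).
- by split; apply: jsl_bot_least.
- move=> u v [Hux Huy] [Hvx Hvy].
  by split; [exact: (jsl_jn_least HB _ _ _ Hux Hvx) | exact: (jsl_jn_least HB _ _ _ Huy Hvy)].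
- move=> u v Huv [Hvx Hvy]; split; exact: jsl_trans HB _ _ _ Huv _.
Qed.

Lemma dual_top t : le B t (bot (dual B)).
Proof. by rewrite /=; apply/(le_greatest HB (fun _ => True)). Qed.

Lemma dual_delta a (s t : st B) : le B t (delta (dual B) a s) <-> le B (delta B a t) s.
Proof.
rewrite /=; apply: (le_greatest HB (fun t => le B (delta B a t) s)).
- by rewrite (jsl_delta_bot HB); apply: jsl_bot_least.
- by move=> u v Hu Hv; rewrite (jsl_delta_jn HB); exact: (jsl_jn_least HB _ _ _ Hu Hv).
- by move=> u v Huv Hv; apply: jsl_trans HB _ _ _ (delta_mono HB a _ _ Huv) Hv.
Qed.

Lemma dual_init t : le B t (init (dual B)) <-> ~ fin B t.
Proof.
have [sf Hsf] := jsl_final HB.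
have nfinE u : ~ fin B u <-> le B u sf by rewrite Hsf; split=> [/NNPP | H []].
rewrite /=; apply: (le_greatest HB (fun t => ~ fin B t)).
- by apply/nfinE/jsl_bot_least.
- by move=> u v /nfinE Hu /nfinE Hv; apply/nfinE/jsl_jn_least.
- by move=> u v Huv /nfinE Hv; apply/nfinE/(jsl_trans HB _ _ _ Huv Hv).
Qed.

Lemma dual_galois w (s t : st B) : le B t (deltaw (dual B) w s) <-> le B (deltaw B (rev w) t) s.
Proof.
elim: w s t => [|a w IH] s t //=.
by rewrite -/(deltaw (dual B) w _) IH rev_cons deltaw_rcons dual_delta.
Qed.

Lemma dual_lang w (s : st B) : lang_of (dual B) s w <-> ~ le B (deltaw B (rev w) (init B)) s.
Proof. by rewrite /lang_of /= -dual_galois. Qed.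

End Dual.

Fixpoint allseqs {X : Type} (l : seq X) (n : nat) : seq (seq X) :=
  if n is n'.+1 then List.flat_map (fun x => List.map (cons x) (allseqs l n')) l
  else [:: [::]].

Lemma allseqs_complete {X : Type} (l : seq X) (Hl : forall x, List.In x l) r :
  List.In r (allseqs l (size r)).
Proof.
elim: r => [|x r IH] /=; first by left.
by apply/List.in_flat_map; exists x; split=> //; apply: List.in_map.
Qed.

Lemma map_eq_in {X Y : Type} (f h : X -> Y) (l : seq X) x :
  map f l = map h l -> List.In x l -> f x = h x.
Proof. by elim: l => [|y l IH] //= [Ey El] [<-|Hx] //; apply: IH. Qed.

Section TransitionSemiring.
Context {Sigma : Type} {A : jdfa Sigma} (HA : is_jsl_dfa A).

Notation ts_carrier := (fun g : st A -> st A => exists ws, g = fjoin A ws).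

Lemma ts_eq (g h : ts_st A) : ts_val A g = ts_val A h -> g = h.
Proof.
case: g h => f Hf [f' Hf'] /= E; subst f'; congr exist; exact: proof_irrelevance.
Qed.

Lemma ts_pick_spec f : (exists k, ts_val A k = f) -> ts_val A (ts_pick A f) = f.
Proof. exact: epsilon_spec. Qed.

Lemma fjoin_ub {ws w} s : List.In w ws -> le A (deltaw A w s) (fjoin A ws s).
Proof. exact: (bigjn_map_ub HA (fun w => deltaw A w s)). Qed.

Lemma fjoin_least ws s c :
  (forall w, List.In w ws -> le A (deltaw A w s) c) -> le A (fjoin A ws s) c.
Proof. exact: (bigjn_map_least HA (fun w => deltaw A w s)). Qed.

Lemma fjoin_cat ws1 ws2 s :
  fjoin A (ws1 ++ ws2) s = jn A (fjoin A ws1 s) (fjoin A ws2 s).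
Proof.
apply: (jsl_antisym HA).
  apply: fjoin_least => w Hw; case: (List.in_app_or _ _ _ Hw) => {}Hw.
    exact: jsl_trans HA _ _ _ (fjoin_ub _ Hw) (jsl_jn_ubl HA _ _).
  exact: jsl_trans HA _ _ _ (fjoin_ub _ Hw) (jsl_jn_ubr HA _ _).
by apply: (jsl_jn_least HA); apply: fjoin_least => w Hw;
  apply: fjoin_ub; apply: List.in_or_app; tauto.
Qed.

Lemma ts_val_jn g h :
  ts_val A (jn (ts A) g h) = fun s => jn A (ts_val A g s) (ts_val A h s).
Proof.
apply: ts_pick_spec; case: g h => f1 [ws1 E1] [f2 [ws2 E2]] /=.
have E : (fun s => jn A (f1 s) (f2 s)) = fjoin A (ws1 ++ ws2).
  by apply: functional_extensionality => s; rewrite fjoin_cat E1 E2.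
by exists (exist ts_carrier _ (ex_intro _ _ E)).
Qed.

Lemma ts_val_init : ts_val A (init (ts A)) = id.
Proof.
apply: ts_pick_spec.
have E : id = fjoin A [:: [::]].
  apply: functional_extensionality => s; apply: (jsl_antisym HA).
    exact: jsl_jn_ubl.
  exact: jsl_jn_least HA _ _ _ (jsl_refl HA _) (jsl_bot_least HA _).
by exists (exist ts_carrier _ (ex_intro _ _ E)).
Qed.

Lemma ts_val_delta a g :
  ts_val A (delta (ts A) a g) = fun s => delta A a (ts_val A g s).
Proof.
set P := fun k => exists ws, ts_val A g = fjoin A ws /\
    ts_val A k = fjoin A [seq rcons w a | w <- ws].
have [ws [Eg Ek]] : P (delta (ts A) a g).
  rewrite /=; apply: epsilon_spec; case: g {P} => f [ws E].
  by exists (exist ts_carrier _ (ex_intro _ [seq rcons w a | w <- ws] erefl)), ws.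
rewrite Ek Eg; apply: functional_extensionality => s.
rewrite /fjoin (delta_bigjn HA) -!map_comp.
by congr bigjn; apply: eq_map => w /=; rewrite deltaw_rcons.
Qed.

Lemma ts_val_deltaw v g :
  ts_val A (deltaw (ts A) v g) = fun s => deltaw A v (ts_val A g s).
Proof.
by elim: v g => [|a v IH] g //=; rewrite -/(deltaw (ts A) v _) IH ts_val_delta.
Qed.

Lemma ts_val_reach v : ts_val A (deltaw (ts A) v (init (ts A))) = deltaw A v.
Proof. by rewrite ts_val_deltaw ts_val_init. Qed.

Lemma fin_ts g : fin (ts A) g <-> fin A (ts_val A g (init A)).
Proof.
have [sf Hsf] := jsl_final HA.
split=> [[ws [E [w Hw Hacc]]] | ].
  rewrite Hsf E => Hle; move: Hacc; rewrite /lang_of Hsf; apply.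
  exact: jsl_trans HA _ _ _ (fjoin_ub _ Hw) Hle.
case: g => f [ws E] /=; rewrite Hsf E /fjoin => /(not_le_bigjn_map HA) [w Hw Hacc].
by exists ws; split=> //; exists w => //; rewrite /lang_of Hsf.
Qed.

(* Every element of ts(A) is the join of the maps delta_v below it, so the
   order of ts(A) is detected by the generators delta_v. *)
Lemma ts_le_generators (x y : ts_st A) :
  (forall v, le (ts A) (deltaw (ts A) v (init (ts A))) x ->
             le (ts A) (deltaw (ts A) v (init (ts A))) y) ->
  le (ts A) x y.
Proof.
case: x => f [ws E] Hgen s /=; rewrite E.
apply: fjoin_least => w Hw.
have Hwy : le (ts A) (deltaw (ts A) w (init (ts A))) y.
  by apply: Hgen => t /=; rewrite ts_val_reach E; apply: fjoin_ub.
by move: (Hwy s); rewrite /= ts_val_reach.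
Qed.

(* ts(A) is finite: an element is determined by its table of values on an
   exhaustive list of states of A. *)
Lemma ts_finite : exists l : seq (ts_st A), forall g, List.In g l.
Proof.
have [l Hl] := jsl_finite HA.
pose tabulated r g := map (ts_val A g) l = r.
exists (List.map (fun r => epsilon (inhabits (ts_bot A)) (tabulated r))
  (allseqs l (size l))).
move=> g; apply/List.in_map_iff; exists (map (ts_val A g) l); split.
  apply: ts_eq; apply: functional_extensionality => s.
  apply: (map_eq_in _ _ l) (Hl s).
  by apply: (epsilon_spec _ (tabulated _)); exists g.
by rewrite -{1}(size_map (ts_val A g) l); apply: allseqs_complete.
Qed.

Lemma ts_jsl : is_jsl_dfa (ts A).
Proof.
have ts_trans (x y z : ts_st A) : le (ts A) x y -> le (ts A) y z -> le (ts A) x z.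
  by move=> Hxy Hyz s; apply: jsl_trans HA _ _ _ (Hxy s) (Hyz s).
have ts_ubl (x y : ts_st A) : le (ts A) x (jn (ts A) x y).
  by move=> s; rewrite ts_val_jn; apply: jsl_jn_ubl.
have ts_ubr (x y : ts_st A) : le (ts A) y (jn (ts A) x y).
  by move=> s; rewrite ts_val_jn; apply: jsl_jn_ubr.
split=> //.
- exact: ts_finite.
- by move=> x s; apply: jsl_refl.
- move=> x y Hxy Hyx; apply/ts_eq/functional_extensionality => s.
  exact: jsl_antisym HA _ _ (Hxy s) (Hyx s).
- move=> x y z Hxz Hyz s; rewrite ts_val_jn.
  exact: jsl_jn_least HA _ _ _ (Hxz s) (Hyz s).
- by move=> x s; apply: jsl_bot_least.
- move=> a x y; apply/ts_eq/functional_extensionality => s.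
  by rewrite ts_val_delta !ts_val_jn !ts_val_delta (jsl_delta_jn HA).
- move=> a; apply/ts_eq/functional_extensionality => s.
  by rewrite ts_val_delta (jsl_delta_bot HA).
- have [sf Hsf] := jsl_final HA.
  have [l Hl] := ts_finite.
  pose P (g : ts_st A) := le A (ts_val A g (init A)) sf.
  have Pbot : P (bot (ts A)) by apply: jsl_bot_least.
  have Pjn x y : P x -> P y -> P (jn (ts A) x y).
    by rewrite /P ts_val_jn; apply: jsl_jn_least.
  have [z [Pz Hz]] := ex_greatest Hl ts_trans ts_ubl ts_ubr P Pbot Pjn.
  exists z => g; rewrite fin_ts Hsf; split=> [Hn Hle | Hn Hle]; apply: Hn.
    exact: jsl_trans HA _ _ _ (Hle _) Pz.
  exact: Hz.
Qed.

End TransitionSemiring.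

Lemma morph_inv {Sigma : Type} (A B : jdfa Sigma) (f : st A -> st B) (g : st B -> st A) :
  jdfa_morph A B f -> cancel f g -> cancel g f -> jdfa_morph B A g.
Proof.
move=> [Hjn [Hbot [Hdelta [Hinit Hfin]]]] fK gK; split; [|split; [|split; [|split]]].
- by move=> x y; rewrite -{1}(gK x) -{1}(gK y) -Hjn fK.
- by rewrite -Hbot fK.
- by move=> a x; rewrite -{1}(gK x) -Hdelta fK.
- by rewrite -Hinit fK.
- by move=> x; rewrite Hfin gK.
Qed.

Arguments rqc_union {Sigma B K1 K2} _ _.
Arguments rqc_rder {Sigma B K} v _.

Section RightDerivativeClosure.
Context {Sigma : Type} {B : jdfa Sigma}.

Lemma lang_ext (K K' : seq Sigma -> Prop) : (forall w, K w <-> K' w) -> K = K'.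
Proof.
move=> H; apply: functional_extensionality => w.
exact: propositional_extensionality.
Qed.

Lemma rqc_ext {K K'} : rqc_set B K -> (forall w, K w <-> K' w) -> rqc_set B K'.
Proof. by move=> HK /lang_ext <-. Qed.

Lemma rqc_bigunion {X : Type} (l : seq X) (F : X -> seq Sigma -> Prop) :
  (forall x, List.In x l -> rqc_set B (F x)) ->
  rqc_set B (fun w => exists2 x, List.In x l & F x w).
Proof.
elim: l => [|x l IH] HF.
  by apply: rqc_ext (rqc_empty B) _ => w; split=> // [[]].
apply: rqc_ext (rqc_union (HF x (or_introl erefl)) (IH _)) _.
  by move=> y Hy; apply: HF; right.
move=> w; split=> [[Hxw | [y Hy Hyw]] | [y [<- | Hy] Hyw]].
- by exists x; first left.
- by exists y; first right.
- by left.
- by right; exists y.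
Qed.

Lemma rqc_eq (K1 K2 : rqc_st B) : rqc_val B K1 = rqc_val B K2 -> K1 = K2.
Proof.
case: K1 K2 => f Hf [f' Hf'] /= E; subst f'; congr exist; exact: proof_irrelevance.
Qed.

Lemma rqc_pick_val (K : rqc_st B) : rqc_pick B (rqc_val B K) = K.
Proof. by apply/rqc_eq/(epsilon_spec _ (fun k => rqc_val B k = rqc_val B K)); exists K. Qed.

End RightDerivativeClosure.

Section Isomorphism.
Context {Sigma : Type} {A : jdfa Sigma} (HA : is_jsl_dfa A) (HR : reachable A).

Let HT : is_jsl_dfa (ts A) := ts_jsl HA.

Definition Phi (x : st (dual (ts A))) : seq Sigma -> Prop := lang_of (dual (ts A)) x.

Lemma Phi_char x w :
  Phi x w <-> ~ (forall s, le A (deltaw A (rev w) s) (ts_val A x s)).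
Proof. by rewrite /Phi (dual_lang HT) /= (ts_val_reach HA). Qed.

Lemma Phi_rev x v : Phi x (rev v) <-> ~ le (ts A) (deltaw (ts A) v (init (ts A))) x.
Proof. by rewrite /Phi (dual_lang HT) revK. Qed.

(* Phi is injective: the order of ts(A) is detected by the maps delta_v. *)
Lemma Phi_inj x y : (forall w, Phi x w <-> Phi y w) -> x = y.
Proof.
have le_of (u v : st (ts A)) : (forall w, Phi v w -> Phi u w) -> le (ts A) u v.
  move=> Hvu; apply: (ts_le_generators HA) => w Hu; apply: NNPP => Hv.
  by move: (Hvu (rev w)); rewrite !Phi_rev => /(_ Hv).
by move=> E; apply: (jsl_antisym HT); apply: le_of => w /E.
Qed.

Lemma Phi_meet x y w : Phi (jn (dual (ts A)) x y) w <-> Phi x w \/ Phi y w.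
Proof.
rewrite /Phi !(dual_lang HT) (dual_meet HT).
by split=> [/not_and_or | [Hx [Hxy _] | Hy [_ Hxy]]].
Qed.

Lemma Phi_bot w : Phi (bot (dual (ts A))) w <-> False.
Proof. by rewrite /Phi (dual_lang HT); split=> //; apply; apply: (dual_top HT). Qed.

Lemma Phi_init w : Phi (init (dual (ts A))) w <-> lang_of (dual A) (init (dual A)) w.
Proof.
by rewrite /Phi !(dual_lang HT, dual_lang HA) (dual_init HT) (dual_init HA)
  (fin_ts HA) (ts_val_reach HA).
Qed.

(* The states of a reachable A are joins of the delta_u(s_0), so Phi x is a
   finite union of right derivatives L(A^op, x s) (rev u)^{-1}. *)
Lemma Phi_rqc x : rqc_set (dual A) (Phi x).
Proof.
have [l Hl] := jsl_finite HA.
have Hs s : rqc_set (dual A) (fun w => ~ le A (deltaw A (rev w) s) (ts_val A x s)).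
  have [ws Es] := HR s.
  pose F u w := lang_of (dual A) (ts_val A x s) (w ++ rev u).
  apply: rqc_ext (rqc_bigunion ws F (fun u _ => rqc_rder (rev u) (rqc_base _ _))) _.
  move=> w; rewrite {1}Es (deltaw_bigjn HA) -map_comp (not_le_bigjn_map HA).
  by split=> -[u Hu HFu]; exists u => //; move: HFu;
    rewrite /F (dual_lang HA) rev_cat revK deltaw_cat.
apply: rqc_ext (rqc_bigunion l _ (fun s _ => Hs s)) _ => w.
rewrite Phi_char; split=> [[s _ Hns] Hall | /not_all_ex_not [s Hns]]; first exact: Hns.
by exists s.
Qed.

Lemma Phi_greatest (P : st (ts A) -> Prop) :
  P (bot (ts A)) -> (forall x y, P x -> P y -> P (jn (ts A) x y)) ->
  (forall x y, le (ts A) x y -> P y -> P x) ->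
  forall w, Phi (greatest (init (ts A)) (le (ts A)) P) w <->
            ~ P (deltaw (ts A) (rev w) (init (ts A))).
Proof. by move=> Pbot Pjn Pdown w; rewrite /Phi (dual_lang HT) (le_greatest HT). Qed.

(* Every language of rqc(A^op) is accepted by a state of ts(A)^op: the
   generators L(A^op, s) and the right derivatives K v^{-1} are accepted by
   greatest elements of suitable sets of maps, unions by meets. *)
Lemma Phi_surj K : rqc_set (dual A) K -> exists x, forall w, Phi x w <-> K w.
Proof.
elim=> [s | | K1 K2 _ [x1 H1] _ [x2 H2] | K0 v _ [x Hx]].
- pose P (g : st (ts A)) := le A (ts_val A g (init A)) s.
  exists (greatest (init (ts A)) (le (ts A)) P) => w.
  rewrite Phi_greatest; first by rewrite /P (ts_val_reach HA) (dual_lang HA).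
  + exact: jsl_bot_least.
  + by move=> g h Hg Hh; rewrite /P (ts_val_jn HA); apply: jsl_jn_least.
  + by move=> g h Hgh Hh; apply: jsl_trans HA _ _ _ (Hgh _) Hh.
- by exists (bot (dual (ts A))) => w; rewrite Phi_bot.
- by exists (jn (dual (ts A)) x1 x2) => w; rewrite Phi_meet H1 H2.
- pose P (g : st (ts A)) :=
    forall s, le A (ts_val A g (deltaw A (rev v) s)) (ts_val A x s).
  exists (greatest (init (ts A)) (le (ts A)) P) => w.
  apply: (iff_trans _ (Hx (w ++ v))).
  rewrite Phi_greatest; first rewrite Phi_char /P (ts_val_reach HA) rev_cat.
  + by split=> Hn Hle; apply: Hn => s; move: (Hle s); rewrite deltaw_cat.
  + by move=> s; apply: jsl_bot_least.
  + by move=> g h Hg Hh s; rewrite (ts_val_jn HA); apply: jsl_jn_least.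
  + by move=> g h Hgh Hh s; apply: jsl_trans HA _ _ _ (Hgh _) (Hh s).
Qed.

Definition fwd (x : st (dual (ts A))) : st (rqc (dual A)) :=
  exist (rqc_set (dual A)) (Phi x) (Phi_rqc x).

Definition bwd (K : st (rqc (dual A))) : st (dual (ts A)) :=
  epsilon (inhabits (ts_bot A)) (fun x => Phi x = rqc_val (dual A) K).

(* fwd is a morphism: this collects Phi_meet, Phi_bot and Phi_init; the
   transitions match since delta*_a x accepts w iff x accepts a w. *)
Lemma fwd_morph : jdfa_morph (dual (ts A)) (rqc (dual A)) fwd.
Proof.
split; [|split; [|split; [|split]]] => //.
- move=> x y; rewrite -[LHS]rqc_pick_val; congr rqc_pick.
  by apply: lang_ext => w; rewrite /= Phi_meet.
- by apply: rqc_eq; apply: lang_ext => w; rewrite /= Phi_bot.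
- by move=> a x; rewrite -[LHS]rqc_pick_val.
- by apply: rqc_eq; apply: lang_ext => w; rewrite /= Phi_init.
Qed.

Lemma bwd_spec K : Phi (bwd K) = rqc_val (dual A) K.
Proof.
apply: (epsilon_spec _ (fun x => Phi x = rqc_val (dual A) K)).
have [x Hx] := Phi_surj _ (proj2_sig K).
by exists x; apply: lang_ext.
Qed.

Lemma fwdK : cancel fwd bwd.
Proof. by move=> x; apply: Phi_inj => w; rewrite bwd_spec. Qed.

Lemma bwdK : cancel bwd fwd.
Proof. by move=> K; apply: rqc_eq; rewrite /= bwd_spec. Qed.

End Isomorphism.

Theorem proposition3p14 (Sigma : finType) (A : jdfa Sigma) :
  is_jsl_dfa A -> reachable A -> jdfa_iso (dual (ts A)) (rqc (dual A)).
Proof.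
move=> HA HR.
have fwd_hom := fwd_morph HA HR.
have fK := fwdK HA HR.
have gK := bwdK HA HR.
exists (fwd HA HR), bwd; split=> //; split=> //.
exact: morph_inv fwd_hom fK gK.
Qed.
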